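(* Let $f(x)=\frac1n\sum_{i=1}^nf_i(x)$ with each $f_i:\mathbb{R}^d\to\mathbb{R}$ differentiable and $\mu$-strongly convex ($\mu>0$), $x_\star$ the minimizer of $f$, and suppose there exists $\nu>0$ such that for all $x^1,\dots,x^n\in\mathbb{R}^d$, $$\frac1n\sum_{j=1}^n\Big\|\nabla f_j(x^j)-\frac1n\sum_{i=1}^n\nabla f_i(x^i)-\nabla f_j(x_\star)\Big\|^2\le\nu^2\frac1n\sum_{j=1}^n\|x^j-x_\star\|^2.$$ Let $x_0,w_0^1,\dots,w_0^n\in\mathbb{R}^d$ be arbitrary and run Point SAGA (see context). Then for any $\gamma>0$ and all $k\ge0$, $$\mathbb{E}[\Psi_k]\le\max\left\{\left(\frac1{1+\gamma\mu}\right)^k,\ \left(\frac{1}{1+\gamma\mu}\cdot\frac{\gamma\nu^2}{\mu n}+1-\frac1n\right)^k\right\}\Psi_0,\qquad \Psi_k:=\|x_k-x_\star\|^2+\gamma\mu\sum_{i=1}^n\|w_k^i-x_\star\|^2.$$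
   Context: Point SAGA: parameters $\gamma>0$, $x_0\in\mathbb{R}^d$, $w_0^1,\dots,w_0^n\in\mathbb{R}^d$. For $k\ge0$: sample $i_k$ uniformly from $[n]$ independently; $h_k=\nabla f_{i_k}(w_k^{i_k})-\frac1n\sum_{j=1}^n\nabla f_j(w_k^j)$; $x_{k+1}=\operatorname{prox}_{\gamma f_{i_k}}(x_k+\gamma h_k)$; $w_{k+1}^{i_k}=x_{k+1}$ and $w_{k+1}^j=w_k^j$ for $j\ne i_k$. $\operatorname{prox}_{\gamma\phi}(y):=\arg\min_x\{\phi(x)+\frac1{2\gamma}\|x-y\|^2\}$. $\mu$-strong convexity of $g$: $g(y)+\langle\nabla g(y),x-y\rangle+\frac{\mu}{2}\|x-y\|^2\le g(x)$ for all $x,y$. *)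

From HB Require Import structures.
From mathcomp Require Import all_boot all_order all_algebra.
From mathcomp Require Import all_classical all_reals all_analysis.
Set Implicit Arguments. Unset Strict Implicit. Unset Printing Implicit Defensive.
Import Order.TTheory GRing.Theory Num.Theory.
Import numFieldNormedType.Exports.
Local Open Scope ring_scope.

Section PointSAGA.
Variables (R : realType) (d n : nat).
Local Notation V := 'rV[R]_d.

Definition dotv (u v : V) : R := \sum_(j < d) u 0 j * v 0 j.
Definition sqnorm (v : V) : R := \sum_(j < d) (v 0 j) ^+ 2.

Definition grad (g : V -> R) (x : V) : V :=
  \row_(j < d) ('d g x) (delta_mx 0 j : V).

Definition strongly_convex (mu : R) (g : V -> R) : Prop :=
  forall x y : V, g y + dotv (grad g y) (x - y) + mu / 2 * sqnorm (x - y) <= g x.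

(* prox_{gamma phi}(y) := argmin_x { phi x + 1/(2 gamma) ||x - y||^2 }
   (chosen by classical choice; unique for strongly convex phi) *)
Definition prox (gamma : R) (phi : V -> R) (y : V) : V :=
  xget 0 [set x : V | forall z : V,
    phi x + (2 * gamma)^-1 * sqnorm (x - y) <= phi z + (2 * gamma)^-1 * sqnorm (z - y)].

Definition saga_step (f : 'I_n -> V -> R) (gamma : R)
    (st : V * ('I_n -> V)) (i : 'I_n) : V * ('I_n -> V) :=
  let: (x, w) := st in
  let h := grad (f i) (w i) - n%:R^-1 *: \sum_(j < n) grad (f j) (w j) in
  let x' := prox gamma (f i) (x + gamma *: h) in
  (x', fun j => if j == i then x' else w j).

Definition saga_run (f : 'I_n -> V -> R) (gamma : R) (x0 : V) (w0 : 'I_n -> V)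
    (s : seq 'I_n) : V * ('I_n -> V) :=
  foldl (saga_step f gamma) (x0, w0) s.

Definition Psi (gamma mu : R) (xs : V) (st : V * ('I_n -> V)) : R :=
  sqnorm (st.1 - xs) + gamma * mu * \sum_(i < n) sqnorm (st.2 i - xs).

(* E[Psi_k] with i_0,...,i_{k-1} i.i.d. uniform on [n]: average over all
   k-tuples of indices *)
Definition EPsi (f : 'I_n -> V -> R) (gamma mu : R) (xs x0 : V) (w0 : 'I_n -> V)
    (k : nat) : R :=
  (n%:R ^+ k)^-1 *
    \sum_(t : k.-tuple 'I_n) Psi gamma mu xs (saga_run f gamma x0 w0 (tval t)).

End PointSAGA.

From HB Require Import structures.
From mathcomp Require Import all_boot all_order all_algebra.
From mathcomp Require Import all_classical all_reals all_analysis.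
From mathcomp Require Import ring lra.
Import Order.TTheory GRing.Theory Num.Theory.
Import numFieldNormedType.Exports.
Set Implicit Arguments. Unset Strict Implicit. Unset Printing Implicit Defensive.
Local Open Scope ring_scope.

(* Let s = 1 + gamma mu.  The prox of a mu-strongly convex f_i is a contraction in the sense
   s^2 |prox(a) - q|^2 <= |a - (q + gamma grad f_i(q))|^2; it is derived from the quadratic
   growth of the prox objective around its minimizer, so f_i is never differentiated at the
   new iterate.  At q = x_star this gives s^2 |x_(k+1) - x_star|^2 <= |x_k - x_star + gamma e_i|^2,
   where the estimator errors e_i sum to zero.  Averaging over i, the cross terms cancel and the
   variance bound controls the errors by the table distances; since a step overwrites a single
   table entry, the table part of Psi shrinks by the factor 1 - 1/n.  Hence the average of Psi
   over the next index is at most rho Psi, rho being the larger of the two rates, and induction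
   over the index tuples gives the bound. *)

Lemma continuous_sum (R : realType) (T : topologicalType) (I : Type) (r : seq I)
    (F : I -> T -> R) :
  (forall i, continuous (F i)) -> continuous (fun x => \sum_(i <- r) F i x).
Proof.
move=> Fc; elim: r => [|i r IH].
  under eq_fun do rewrite big_nil.
  exact: cst_continuous.
under eq_fun do rewrite big_cons.
by move=> x; apply: continuousD; [exact: Fc | exact: IH].
Qed.

Lemma le_of_forall_mul1B (R : realFieldType) (c D : R) :
  (forall t, 0 < t <= 1 -> c * (1 - t) <= D) -> c <= D.
Proof.
move=> cD; have [c_le0|c_gt0] := lerP c 0.
  by apply: (le_trans c_le0); have := cD 1; rewrite ltr01 lexx subrr mulr0; exact.
apply/ler_addgt0Pr => e e0; pose t := e / (c + e).
have ce0 : 0 < c + e by rewrite addr_gt0.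
have tce : t * (c + e) = e by rewrite mulfVK ?gt_eqF.
have t0 : 0 < t by rewrite divr_gt0.
have t1 : t <= 1 by rewrite ler_pdivrMr // mul1r lerDr ltW.
have := cD t; rewrite t0 t1 => /(_ isT); nra.
Qed.

Lemma sum_tuple_cons (T : finType) (M : nmodType) k (F : k.+1.-tuple T -> M) :
  \sum_(t : k.+1.-tuple T) F t = \sum_(i : T) \sum_(t : k.-tuple T) F [tuple of i :: t].
Proof.
rewrite pair_big /= (reindex (fun p : T * k.-tuple T => [tuple of p.1 :: p.2])) //=.
exists (fun t => (thead t, behead_tuple t)) => [[a t] _ | t _] /=.
  by congr pair; apply: val_inj.
by apply: val_inj; rewrite /= [in RHS](tuple_eta t).
Qed.

Lemma maxr_expn (R : realDomainType) (a b : R) k : 0 <= a -> 0 <= b ->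
  Num.max (a ^+ k) (b ^+ k) = Num.max a b ^+ k.
Proof.
move=> a0 b0; have [ab|ba] := leP a b.
  by rewrite max_r // lerXn2r.
by rewrite max_l // lerXn2r // ltW.
Qed.

Section EuclideanSpace.
Variables (R : realType) (d : nat).
Local Notation V := 'rV[R]_d.
Implicit Types (u v w : V) (c : R).

Lemma sqnormE v : sqnorm v = dotv v v.
Proof. by apply: eq_bigr => j _; rewrite expr2. Qed.

Lemma dotvC u v : dotv u v = dotv v u.
Proof. by apply: eq_bigr => j _; rewrite mulrC. Qed.

Lemma dotvDr u v w : dotv u (v + w) = dotv u v + dotv u w.
Proof. by rewrite /dotv -big_split; apply: eq_bigr => j _; rewrite !mxE mulrDr. Qed.

Lemma dotvZr u v c : dotv u (c *: v) = c * dotv u v.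
Proof. by rewrite /dotv mulr_sumr; apply: eq_bigr => j _; rewrite !mxE mulrCA. Qed.

Lemma dotvNr u v : dotv u (- v) = - dotv u v.
Proof. by rewrite -scaleN1r dotvZr mulN1r. Qed.

Lemma dotv_sumr I (r : seq I) (P : pred I) u (F : I -> V) :
  dotv u (\sum_(i <- r | P i) F i) = \sum_(i <- r | P i) dotv u (F i).
Proof.
elim/big_rec2: _ => [|i y1 y2 _ <-]; last by rewrite dotvDr.
by rewrite /dotv big1 // => j _; rewrite mxE mulr0.
Qed.

Lemma sqnorm_ge0 v : 0 <= sqnorm v.
Proof. by apply: sumr_ge0 => j _; rewrite sqr_ge0. Qed.

Lemma sqnormD u v : sqnorm (u + v) = sqnorm u + 2 * dotv u v + sqnorm v.
Proof. by rewrite !sqnormE dotvDr !(dotvC (u + v)) !dotvDr (dotvC v u); ring. Qed.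

Lemma sqnormN v : sqnorm (- v) = sqnorm v.
Proof. by rewrite !sqnormE dotvNr dotvC dotvNr opprK. Qed.

Lemma sqnormB u v : sqnorm (u - v) = sqnorm u - 2 * dotv u v + sqnorm v.
Proof. by rewrite sqnormD dotvNr sqnormN; ring. Qed.

Lemma sqnormZ c v : sqnorm (c *: v) = c ^+ 2 * sqnorm v.
Proof. by rewrite !sqnormE dotvZr dotvC dotvZr; ring. Qed.

Lemma sqr_coord_le_sqnorm v j : v 0 j ^+ 2 <= sqnorm v.
Proof. by rewrite /sqnorm (bigD1 j) //= lerDl sumr_ge0 // => i _; rewrite sqr_ge0. Qed.

Lemma sqnorm_le0 v : sqnorm v <= 0 -> v = 0.
Proof.
move=> v0; apply/rowP => j; rewrite mxE; apply/eqP; rewrite -sqrf_eq0 eq_le sqr_ge0.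
by rewrite (le_trans (sqr_coord_le_sqnorm v j)).
Qed.

Lemma dotv_young u v c : 0 < c -> 2 * dotv u v <= c * sqnorm u + c^-1 * sqnorm v.
Proof.
move=> c0; have := sqnorm_ge0 (c *: u - v).
rewrite sqnormB sqnormZ dotvC dotvZr dotvC => h; rewrite -subr_ge0.
have -> : c * sqnorm u + c^-1 * sqnorm v - 2 * dotv u v =
    c^-1 * (c ^+ 2 * sqnorm u - 2 * (c * dotv u v) + sqnorm v).
  by field; rewrite gt_eqF.
by rewrite mulr_ge0 // invr_ge0 ltW.
Qed.

Lemma sum_sqnormD_centered n u (e : 'I_n -> V) : \sum_(i < n) e i = 0 ->
  \sum_(i < n) sqnorm (u + e i) = n%:R * sqnorm u + \sum_(i < n) sqnorm (e i).
Proof.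
move=> e0; rewrite (eq_bigr _ (fun i _ => sqnormD u (e i))) !big_split /= -mulr_sumr.
have -> : \sum_(i < n) dotv u (e i) = 0.
  rewrite -dotv_sumr e0 /dotv big1 // => j _; by rewrite mxE mulr0.
by rewrite mulr0 addr0 sumr_const card_ord mulr_natl.
Qed.

Lemma sqnorm_comb (a x y : V) c :
  sqnorm (y + c *: (x - y) - a) =
  c * sqnorm (x - a) + (1 - c) * sqnorm (y - a) - c * (1 - c) * sqnorm (x - y).
Proof.
have -> : y + c *: (x - y) - a = (y - a) + c *: (x - y).
  by apply/rowP => j; rewrite !mxE; ring.
have -> : x - a = (y - a) + (x - y) by apply/rowP => j; rewrite !mxE; ring.
by rewrite !(sqnormD (y - a)) sqnormZ dotvZr; ring.
Qed.

Lemma continuous_sqnormB (y : V) : continuous (fun x : V => sqnorm (x - y)).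
Proof.
apply: continuous_sum => j x.
have cj : continuous (fun z : V => z 0 j - y 0 j).
  by move=> z; apply: continuousB; [exact: coord_continuous | exact: cst_continuous].
rewrite (_ : (fun z : V => _) = fun z => (z 0 j - y 0 j) * (z 0 j - y 0 j)).
  exact: continuousM (cj x) (cj x).
by apply/funext => z; rewrite !mxE expr2.
Qed.

Lemma continuous_coercive_has_min (phi : V -> R) c m : continuous phi -> 0 < m ->
  (forall z, c + m * sqnorm z <= phi z) -> exists p, forall z, phi p <= phi z.
Proof.
move=> phic m0 coer; set B := (phi 0 - c) / m; set M := `|B| + 1.
have M0 : 0 < M by rewrite ltr_pwDr // normr_ge0.
have BM : B < M ^+ 2 by have := ler_norm B; have := normr_ge0 B; rewrite /M; nra.
pose K : set V := fun v => forall j, `[- M, M]%classic (v 0 j).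
have K0 : K 0 by move=> j; rewrite /= in_itv /= mxE oppr_le0 (ltW M0).
have Kc : compact K.
  exact: (@rV_compact _ d (fun=> `[- M, M]%classic) (fun=> @segment_compact _ _ _)).
have [p _ pmin] := compact_EVT_min (ex_intro _ 0 K0) Kc (continuous_subspaceT phic).
exists p => z; have [Kz|Kz] := pselect (K z); first by apply: pmin; rewrite inE.
apply: (le_trans (pmin 0 _)); first by rewrite inE.
move/existsNP: Kz => [j /negP]; rewrite /= in_itv /= negb_and -!ltNge => zj.
have zM : M ^+ 2 < sqnorm z.
  by apply: lt_le_trans (sqr_coord_le_sqnorm z j); case/orP: zj => zj; nra.
have : m * B < m * sqnorm z by rewrite ltr_pM2l // (lt_trans BM).
have := coer z; rewrite /B mulrCA mulfV ?gt_eqF // mulr1; lra.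
Qed.

End EuclideanSpace.

Section StrongConvexity.
Variables (R : realType) (d : nat).
Local Notation V := 'rV[R]_d.

Definition is_prox (gamma : R) (phi : V -> R) (y p : V) : Prop :=
  forall z, phi p + (2 * gamma)^-1 * sqnorm (p - y) <= phi z + (2 * gamma)^-1 * sqnorm (z - y).

Variables (f : V -> R) (mu : R).
Hypothesis f_sc : strongly_convex mu f.

Lemma strongly_convex_comb x y t : 0 <= t <= 1 ->
  f (y + t *: (x - y)) <= t * f x + (1 - t) * f y - mu * t * (1 - t) / 2 * sqnorm (x - y).
Proof.
case/andP=> t0 t1; set z := y + t *: (x - y).
have ex : x - z = (1 - t) *: (x - y) by apply/rowP => j; rewrite !mxE; ring.
have ey : y - z = (- t) *: (x - y) by apply/rowP => j; rewrite !mxE; ring.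
have := f_sc x z; have := f_sc y z.
rewrite ex ey !dotvZr !sqnormZ; set D := dotv _ _; set S := sqnorm _ => hy hx.
have t1' : 0 <= 1 - t by rewrite subr_ge0.
have := ler_wpM2l t0 hx; have := ler_wpM2l t1' hy; nra.
Qed.

Lemma strongly_convex_coercive : 0 < mu ->
  forall z, f 0 - sqnorm (grad f 0) / mu + mu / 4 * sqnorm z <= f z.
Proof.
move=> mu0 z; have mu2 : 0 < (mu / 2)^-1 by rewrite invr_gt0 divr_gt0.
have := f_sc z 0; have := dotv_young (grad f 0) (- z) mu2.
rewrite subr0 dotvNr sqnormN invrK.
have -> : (mu / 2)^-1 * sqnorm (grad f 0) = 2 * (sqnorm (grad f 0) / mu).
  by field; rewrite gt_eqF.
lra.
Qed.

Lemma prox_quadratic_growth gamma a p q : 0 < gamma -> is_prox gamma f a p ->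
  f p + (2 * gamma)^-1 * sqnorm (p - a) + (mu / 2 + (2 * gamma)^-1) * sqnorm (q - p)
  <= f q + (2 * gamma)^-1 * sqnorm (q - a).
Proof.
move=> g0 min_p; set k := (2 * gamma)^-1.
set S := sqnorm (q - p); set A := sqnorm (q - a); set B := sqnorm (p - a).
suff : (mu / 2 + k) * S <= f q + k * A - (f p + k * B) by lra.
apply: le_of_forall_mul1B => t /andP[t0 t1].
have := min_p (p + t *: (q - p)); rewrite -/k sqnorm_comb -/S -/A -/B.
have t01 : 0 <= t <= 1 by rewrite ltW.
have := strongly_convex_comb q p t01; rewrite -/S => hf hp.
rewrite -(ler_pM2l t0); nra.
Qed.

Lemma prox_strongly_monotone gamma a p q : 0 < gamma -> is_prox gamma f a p ->
  (1 + gamma * mu) * sqnorm (p - q) <= dotv (p - q) (a - (q + gamma *: grad f q)).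
Proof.
move=> g0 min_p; have := prox_quadratic_growth q g0 min_p; have := f_sc p q.
set k := (2 * gamma)^-1; set w := p - q; set u := a - q; set G := grad f q.
have -> : p - a = w - u by apply/rowP => j; rewrite !mxE; ring.
have -> : q - a = - u by apply/rowP => j; rewrite !mxE; ring.
have -> : q - p = - w by apply/rowP => j; rewrite !mxE; ring.
have -> : a - (q + gamma *: G) = u - gamma *: G by apply/rowP => j; rewrite !mxE; ring.
rewrite !sqnormN sqnormB dotvDr dotvNr dotvZr (dotvC G) => hsc hgrow.
have -> : (1 + gamma * mu) * sqnorm w = gamma * ((2 * k + mu) * sqnorm w).
  by rewrite /k; field; rewrite gt_eqF.
have -> : dotv w u + - (gamma * dotv w G) = gamma * (2 * k * dotv w u - dotv w G).
  by rewrite /k; field; rewrite gt_eqF.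
rewrite ler_pM2l //; lra.
Qed.

Lemma prox_contraction gamma a p q : 0 < gamma -> 0 <= mu -> is_prox gamma f a p ->
  (1 + gamma * mu) ^+ 2 * sqnorm (p - q) <= sqnorm (a - (q + gamma *: grad f q)).
Proof.
move=> g0 mu0 min_p; have := prox_strongly_monotone q g0 min_p.
set s := 1 + gamma * mu; set r := a - _ => mono.
have s0 : 0 < s by rewrite ltr_pwDl // mulr_ge0 // ltW.
have := ler_wpM2l (ltW s0) (dotv_young (p - q) r s0).
rewrite mulrDr mulVKf ?gt_eqF //; nra.
Qed.

Lemma is_prox_prox gamma y : 0 < gamma -> 0 < mu -> continuous f ->
  is_prox gamma f y (prox gamma f y).
Proof.
move=> g0 mu0 fc; apply: (@xgetPex _ 0 [set p | is_prox gamma f y p]).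
set k := (2 * gamma)^-1; pose phi z := f z + k * sqnorm (z - y).
have k0 : 0 <= k by rewrite invr_ge0 mulr_ge0 // ltW.
have phic : continuous phi.
  move=> x; exact: (continuousD (fc x)
    (continuousM (@cst_continuous _ _ k x) (@continuous_sqnormB _ _ y x))).
apply: (continuous_coercive_has_min phic (_ : 0 < mu / 4)) => [|z].
  by rewrite divr_gt0.
apply: (le_trans (strongly_convex_coercive mu0 z)).
by rewrite lerDl mulr_ge0 // sqnorm_ge0.
Qed.

End StrongConvexity.

Section PointSAGA.
Variables (R : realType) (d n : nat).
Local Notation V := 'rV[R]_d.
Hypothesis n_gt0 : (0 < n)%N.
Variables (f : 'I_n -> V -> R) (mu nu gamma : R) (xs : V).
Hypotheses (mu_gt0 : 0 < mu) (gamma_gt0 : 0 < gamma).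
Hypothesis f_sc : forall i, strongly_convex mu (f i).
Hypothesis f_cont : forall i, continuous (f i).
Hypothesis variance_bound : forall xx : 'I_n -> V,
  n%:R^-1 * \sum_(j < n)
    sqnorm (grad (f j) (xx j) - n%:R^-1 *: \sum_(i < n) grad (f i) (xx i) - grad (f j) xs)
  <= nu ^+ 2 * (n%:R^-1 * \sum_(j < n) sqnorm (xx j - xs)).

Let n_neq0 : n%:R != 0 :> R.
Proof. by rewrite pnatr_eq0 -lt0n. Qed.

(* Optimality of [xs] is read off the variance bound at the constant table. *)
Lemma sum_grad_opt_eq0 : \sum_(i < n) grad (f i) xs = 0.
Proof.
set g := n%:R^-1 *: \sum_(i < n) grad (f i) xs.
have := variance_bound (fun=> xs).
have -> : \sum_(j < n) sqnorm (xs - xs) = 0.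
  by apply: big1 => j _; rewrite subrr /sqnorm big1 // => i _; rewrite mxE expr0n.
rewrite !mulr0 (eq_bigr (fun=> sqnorm g)) => [|j _]; last first.
  by rewrite addrAC subrr add0r sqnormN.
rewrite sumr_const card_ord -[sqnorm g *+ n]mulr_natl mulrA mulVf // mul1r => /sqnorm_le0 g0.
have : n%:R *: g = 0 by rewrite g0 scaler0.
by rewrite /g scalerA mulfV // scale1r.
Qed.

Definition saga_err (w : 'I_n -> V) (i : 'I_n) : V :=
  grad (f i) (w i) - n%:R^-1 *: \sum_(j < n) grad (f j) (w j) - grad (f i) xs.

Lemma sum_saga_err w : \sum_(i < n) saga_err w i = 0.
Proof.
rewrite !sumrB sumr_const card_ord -scaler_nat scalerA mulfV // scale1r subrr.
by rewrite sum_grad_opt_eq0 subr0.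
Qed.

Lemma saga_step_contraction x w i :
  (1 + gamma * mu) ^+ 2 * sqnorm ((saga_step f gamma (x, w) i).1 - xs) <=
  sqnorm ((x - xs) + gamma *: saga_err w i).
Proof.
rewrite /saga_step /=; set a := x + gamma *: _.
have -> : x - xs + gamma *: saga_err w i = a - (xs + gamma *: grad (f i) xs).
  by rewrite /saga_err /a scalerBr opprD addrACA.
apply: prox_contraction (ltW mu_gt0) _ => //.
exact: is_prox_prox.
Qed.

Lemma sum_sqnorm_saga_step_x x w :
  (1 + gamma * mu) ^+ 2 * \sum_(i < n) sqnorm ((saga_step f gamma (x, w) i).1 - xs)
  <= n%:R * sqnorm (x - xs) + gamma ^+ 2 * nu ^+ 2 * \sum_(j < n) sqnorm (w j - xs).
Proof.
rewrite mulr_sumr; apply: (le_trans (ler_sum _ (fun i _ => saga_step_contraction x w i))).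
rewrite sum_sqnormD_centered; last by rewrite -scaler_sumr sum_saga_err scaler0.
under eq_bigr do rewrite sqnormZ.
rewrite -mulr_sumr -mulrA lerD2l ler_wpM2l ?sqr_ge0 //.
by have := variance_bound w; rewrite mulrCA ler_pM2l // invr_gt0 ltr0n.
Qed.

Lemma sum_sqnorm_saga_step_w x w i :
  \sum_(j < n) sqnorm ((saga_step f gamma (x, w) i).2 j - xs) =
  sqnorm ((saga_step f gamma (x, w) i).1 - xs) +
   (\sum_(j < n) sqnorm (w j - xs) - sqnorm (w i - xs)).
Proof.
rewrite /saga_step /= (bigD1 i) //= eqxx [X in _ = _ + (X - _)](bigD1 i) //=.
congr (_ + _); rewrite [RHS]addrC addKr; apply: eq_bigr => j /negbTE ->; done.
Qed.

Lemma sum_Psi_saga_step x w :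
  \sum_(i < n) Psi gamma mu xs (saga_step f gamma (x, w) i) =
  (1 + gamma * mu) * \sum_(i < n) sqnorm ((saga_step f gamma (x, w) i).1 - xs)
  + gamma * mu * (n%:R - 1) * \sum_(j < n) sqnorm (w j - xs).
Proof.
have sum_shift (P W : 'I_n -> R) c :
    \sum_(i < n) (P i + c * (P i + (\sum_(j < n) W j - W i))) =
    (1 + c) * \sum_(i < n) P i + c * (n%:R - 1) * \sum_(j < n) W j.
  rewrite big_split -mulr_sumr big_split sumrB sumr_const card_ord /=.
  by rewrite -mulr_natl; ring.
rewrite /Psi; under eq_bigr do rewrite sum_sqnorm_saga_step_w.
exact: sum_shift.
Qed.

Definition saga_rate : R := Num.max ((1 + gamma * mu)^-1)
  ((1 + gamma * mu)^-1 * (gamma * nu ^+ 2 / (mu * n%:R)) + 1 - n%:R^-1).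

Lemma mean_Psi_saga_step x w :
  n%:R^-1 * \sum_(i < n) Psi gamma mu xs (saga_step f gamma (x, w) i)
  <= saga_rate * Psi gamma mu xs (x, w).
Proof.
have := sum_sqnorm_saga_step_x x w; rewrite sum_Psi_saga_step.
set Q := \sum_(i < n) sqnorm ((saga_step _ _ _ _).1 - xs).
set S := \sum_(j < n) sqnorm (w j - xs); rewrite /Psi /= -/S.
set X := sqnorm (x - xs); set s := 1 + gamma * mu => hQ.
have s0 : 0 < s by rewrite ltr_pwDl // mulr_ge0 // ltW.
have X0 : 0 <= X by exact: sqnorm_ge0.
have S0 : 0 <= gamma * mu * S.
  apply: mulr_ge0; first by rewrite mulr_ge0 // ltW.
  by apply: sumr_ge0 => j _; exact: sqnorm_ge0.
have hQ' : s * Q <= s^-1 * (n%:R * X + gamma ^+ 2 * nu ^+ 2 * S).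
  have si0 : 0 <= s^-1 by rewrite invr_ge0 ltW.
  by have := ler_wpM2l si0 hQ; rewrite expr2 -mulrA mulKf ?gt_eqF.
apply: (@le_trans _ _ (s^-1 * X +
    (s^-1 * (gamma * nu ^+ 2 / (mu * n%:R)) + 1 - n%:R^-1) * (gamma * mu * S))).
  have -> : s^-1 * X + (s^-1 * (gamma * nu ^+ 2 / (mu * n%:R)) + 1 - n%:R^-1) * (gamma * mu * S)
      = n%:R^-1 * (s^-1 * (n%:R * X + gamma ^+ 2 * nu ^+ 2 * S) + gamma * mu * (n%:R - 1) * S).
    by field; rewrite n_neq0 !gt_eqF.
  by rewrite ler_wpM2l ?invr_ge0 ?ler0n // lerD2r.
rewrite mulrDr; apply: lerD; apply: ler_wpM2r => //.
  by rewrite le_max lexx.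
by rewrite le_max lexx orbT.
Qed.

Lemma saga_rate_ge0 : 0 <= saga_rate.
Proof. by rewrite le_max invr_ge0 addr_ge0 // mulr_ge0 // ltW. Qed.

Lemma saga_run_cons x0 w0 i s :
  saga_run f gamma x0 w0 (i :: s) =
  saga_run f gamma (saga_step f gamma (x0, w0) i).1 (saga_step f gamma (x0, w0) i).2 s.
Proof. by rewrite /saga_run -surjective_pairing. Qed.

Lemma EPsiS x0 w0 k : EPsi f gamma mu xs x0 w0 k.+1 =
  n%:R^-1 * \sum_(i < n)
    EPsi f gamma mu xs (saga_step f gamma (x0, w0) i).1 (saga_step f gamma (x0, w0) i).2 k.
Proof.
rewrite /EPsi sum_tuple_cons exprS invfM -mulrA mulr_sumr.
by congr (_ * _); apply: eq_bigr => i _; congr (_ * _); apply: eq_bigr => t _; rewrite saga_run_cons.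
Qed.

Lemma EPsi_le k x0 w0 : EPsi f gamma mu xs x0 w0 k <= saga_rate ^+ k * Psi gamma mu xs (x0, w0).
Proof.
elim: k x0 w0 => [|k IH] x0 w0.
  rewrite /EPsi !expr0 invr1 !mul1r (eq_bigr (fun=> Psi gamma mu xs (x0, w0))).
    by rewrite sumr_const card_tuple card_ord expn0.
  by move=> t _; rewrite (tuple0 t).
rewrite EPsiS; apply: (@le_trans _ _ (n%:R^-1 * \sum_(i < n)
    saga_rate ^+ k * Psi gamma mu xs (saga_step f gamma (x0, w0) i))).
  rewrite ler_wpM2l ?invr_ge0 ?ler0n //; apply: ler_sum => i _.
  by rewrite [X in Psi _ _ _ X]surjective_pairing; exact: IH.
rewrite -mulr_sumr mulrCA exprSr -mulrA ler_wpM2l ?exprn_ge0 ?saga_rate_ge0 //.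
exact: mean_Psi_saga_step.
Qed.

End PointSAGA.

Theorem mainTheorem12 (R : realType) (d n : nat) (hn : (0 < n)%N)
  (f : 'I_n -> 'rV[R]_d -> R) (mu nu : R) (hmu : 0 < mu) (hnu : 0 < nu)
  (hdiff : forall i x, differentiable (f i) x)
  (hsc : forall i, strongly_convex mu (f i))
  (xs : 'rV[R]_d)
  (hmin : forall x, n%:R^-1 * \sum_(i < n) f i xs <= n%:R^-1 * \sum_(i < n) f i x)
  (hnu_ineq : forall xx : 'I_n -> 'rV[R]_d,
     n%:R^-1 * \sum_(j < n)
        sqnorm (grad (f j) (xx j) - n%:R^-1 *: \sum_(i < n) grad (f i) (xx i)
                - grad (f j) xs)
     <= nu ^+ 2 * (n%:R^-1 * \sum_(j < n) sqnorm (xx j - xs)))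
  (x0 : 'rV[R]_d) (w0 : 'I_n -> 'rV[R]_d) (gamma : R) (hgamma : 0 < gamma) (k : nat) :
  EPsi f gamma mu xs x0 w0 k <=
    Num.max (((1 + gamma * mu)^-1) ^+ k)
            (((1 + gamma * mu)^-1 * (gamma * nu ^+ 2 / (mu * n%:R)) + 1 - n%:R^-1) ^+ k)
    * Psi gamma mu xs (x0, w0).
Proof.
have hcont i : continuous (f i) := fun x => differentiable_continuous (hdiff i x).
have s0 : 0 < 1 + gamma * mu by rewrite ltr_pwDl // mulr_ge0 // ltW.
have n1 : n%:R^-1 <= 1 :> R by rewrite invf_le1 ?ler1n ?ltr0n.
rewrite maxr_expn; first exact: EPsi_le.
  by rewrite invr_ge0 ltW.
suff : 0 <= (1 + gamma * mu)^-1 * (gamma * nu ^+ 2 / (mu * n%:R)) by lra.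
apply: mulr_ge0; first by rewrite invr_ge0 ltW.
by rewrite divr_ge0 ?mulr_ge0 ?sqr_ge0 ?ler0n ?ltW.
Qed.
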